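(* Let $q,N_x,N_T,m\ge 1$ be integers and let $\Phi,\Phi_c\in\mathbb{C}^{qN_x\times qN_x}$. Assume there is a unitary matrix $F\in\mathbb{C}^{qN_x\times qN_x}$ such that $F^{-1}\Phi F=\mathrm{diag}(\widetilde\Phi_1,\dots,\widetilde\Phi_{N_x})$ and $F^{-1}\Phi_c F=\mathrm{diag}(\widetilde\Phi_{c,1},\dots,\widetilde\Phi_{c,N_x})$ are block diagonal with blocks $\widetilde\Phi_n,\widetilde\Phi_{c,n}\in\mathbb{C}^{q\times q}$. Assume further that for every $n=1,\dots,N_x$ there is an invertible $U_n\in\mathbb{C}^{q\times q}$ with $U_n^{-1}\widetilde\Phi_nU_n=\mathrm{diag}(\lambda_{n,1},\dots,\lambda_{n,q})$ and $U_n^{-1}\widetilde\Phi_{c,n}U_n=\mathrm{diag}(\mu_{n,1},\dots,\mu_{n,q})$, and that $|\mu_{n,l}|\neq 1$ for all $n,l$. Then the coarse-grid iteration matrices $E_\Delta^F=I-A_c^{-1}A_S$ and $E_\Delta^{FCF}=(I-A_c^{-1}A_S)(I-A_S)$ satisfy $$\|E_\Delta^F\|_2\le \max_{1\le n\le N_x}\Big\{\kappa(U_n)\max_{1\le l\le q}\Big\{|\lambda_{n,l}^m-\mu_{n,l}|\,\frac{1-|\mu_{n,l}|^{N_T}}{1-|\mu_{n,l}|}\Big\}\Big\}$$ and $$\|E_\Delta^{FCF}\|_2\le \max_{1\le n\le N_x}\Big\{\kappa(U_n)\max_{1\le l\le q}\Big\{|\lambda_{n,l}^m-\mu_{n,l}|\,|\lambda_{n,l}|^m\,\frac{1-|\mu_{n,l}|^{N_T-1}}{1-|\mu_{n,l}|}\Big\}\Big\},$$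 where $\kappa(U_n)=\|U_n\|_2\|U_n^{-1}\|_2$.
   Context: For a square matrix $G$, write $\mathcal{B}_{N_T}(G)$ for the $(N_T+1)\times(N_T+1)$ block matrix (block rows/columns indexed $0,\dots,N_T$) with identity blocks on the diagonal, $-G$ on the first block subdiagonal, and zero elsewhere. The coarse-grid operator is $A_c=\mathcal{B}_{N_T}(\Phi_c)$ and the Schur-complement coarse-grid operator is $A_S=\mathcal{B}_{N_T}(\Phi^m)$; $I$ denotes the identity of the same size. $\|\cdot\|_2$ is the spectral norm. *)

From HB Require Import structures.
From mathcomp Require Import all_boot all_order all_algebra.
Set Implicit Arguments. Unset Strict Implicit. Unset Printing Implicit Defensive.
Import Order.TTheory GRing.Theory Num.Theory.
Local Open Scope ring_scope.

(* Decomposition of a flat index k : 'I_(m*n) into (block, inner) = (k / n, k mod n),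
   inverse of mxvec_index (row-major / lexicographic order). *)
Definition idx_pair (m n : nat) (k : 'I_(m * n)) : 'I_m * 'I_n :=
  enum_val (cast_ord (esym (@mxvec_cast m n)) k).

Definition blkdiag (C : pzRingType) (N q : nat) (B : 'I_N -> 'M[C]_q) : 'M[C]_(N * q) :=
  \matrix_(a, b)
    (let (i, r) := idx_pair a in let (j, s) := idx_pair b in
     if i == j then B i r s else 0).

Definition blkbidiag (C : pzRingType) (NT d : nat) (G : 'M[C]_d) : 'M[C]_(NT.+1 * d) :=
  \matrix_(a, b)
    (let (i, r) := idx_pair a in let (j, s) := idx_pair b in
     if i == j then (r == s)%:R
     else if (i : nat) == (j : nat).+1 then - G r s else 0).

Definition adjmx (C : numClosedFieldType) (m n : nat) (A : 'M[C]_(m, n)) : 'M[C]_(n, m) :=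
  (map_mx Num.conj A)^T.

Definition eigvals (C : numClosedFieldType) (n : nat) (A : 'M[C]_n) : seq C :=
  projT1 (closed_field_poly_normal (char_poly A)).

Definition opnorm2 (C : numClosedFieldType) (n : nat) (A : 'M[C]_n) : C :=
  sqrtC (\big[Num.max/0]_(z <- eigvals (adjmx A *m A)) `|z|).

Definition cond2 (C : numClosedFieldType) (n : nat) (U : 'M[C]_n) : C :=
  opnorm2 U * opnorm2 (invmx U).

From HB Require Import structures.
From mathcomp Require Import all_boot all_order all_algebra.
From mathcomp Require Import ring zify.
Import Order.TTheory GRing.Theory Num.Theory.
Set Implicit Arguments. Unset Strict Implicit. Unset Printing Implicit Defensive.
Local Open Scope ring_scope.

(* The argument has three ingredients.
   - Forward substitution in the block bidiagonal matrices [B_NT(G)] shows that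
     [E^F = I - Ac^-1 AS] is a causal block Toeplitz operator with blocks
     [Phic^k (Phi^m - Phic)], and [E^FCF] one with blocks [Phic^k (Phi^m - Phic) Phi^m]
     (lemmas [blk_EF], [blk_EFCF]).
   - All these blocks lie in the commutative algebra [simdiag F U] of matrices
     sharing the eigenbasis of [F] and the [U n], where they act by their
     eigenvalues; conjugating by the isometry [F] and by [U n] reduces the operator
     to scalar causal convolutions, up to the factor [kappa(U n)].
   - Young's inequality [|g * w|_2 <= |g|_1 |w|_2] for causal convolutions (via the
     Schur test) bounds each scalar convolution; the [l^1] norms of the symbols are
     geometric sums, which give the closed forms of the theorem
     ([opnorm2_toeplitz], [EF_bound], [EFCF_bound]). *)

(* The diagonal entries of [d] are eigenvalues of [P^-1 diag(d) P]: the rows of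
   [P] are eigenvectors. *)
Lemma eigenvalue_diag_conj (F : fieldType) n (P : 'M[F]_n) (d : 'rV[F]_n) i :
  P \in unitmx -> eigenvalue (invmx P *m diag_mx d *m P) (d 0 i).
Proof.
move=> Pu; apply/eigenvalueP; exists (delta_mx 0 i *m P).
  rewrite !mulmxA mulmxK // scalemxAl; congr (_ *m _).
  apply/matrixP => a b; rewrite mul_mx_diag !mxE ord1 eqxx /=.
  by case: (eqVneq b i) => [->|_]; rewrite ?mul1r ?mulr1 ?mul0r ?mulr0.
apply: contraTneq isT => /(congr1 (mulmx^~ (invmx P))) /=.
rewrite mulmxK // mul0mx => /matrixP /(_ 0 i).
by rewrite !mxE !eqxx => /eqP; rewrite oner_eq0.
Qed.

Section Norms.
Variable C : numClosedFieldType.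

(* Nonnegative numbers are comparable, so on them [Num.max] behaves as in a
   total order; this is all we need from maxima of norms. *)
Lemma nonneg_comparable (x y : C) : 0 <= x -> 0 <= y -> x >=< y.
Proof. by move=> x0 y0; apply: real_comparable; apply: ger0_real. Qed.

Lemma bigmax_ge0 (I : Type) (r : seq I) (F : I -> C) :
  (forall i, 0 <= F i) -> 0 <= \big[Num.max/0]_(i <- r) F i.
Proof.
move=> F0; elim/big_ind: _ => // x y x0 y0.
by rewrite comparable_le_max ?x0 // nonneg_comparable.
Qed.

Lemma le_bigmax_nonneg (I : eqType) (r : seq I) (F : I -> C) i :
  (forall i, 0 <= F i) -> i \in r -> F i <= \big[Num.max/0]_(j <- r) F j.
Proof.
move=> F0; elim: r => // a r IH; rewrite in_cons big_cons => /orP[/eqP->|ir].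
  by rewrite comparable_le_max ?lexx // nonneg_comparable ?bigmax_ge0.
by rewrite comparable_le_max ?IH ?orbT // nonneg_comparable ?bigmax_ge0.
Qed.

Definition sqnorm k (x : 'cV[C]_k) : C := \sum_i `|x i 0| ^+ 2.

Lemma sqnorm_ge0 k (x : 'cV[C]_k) : 0 <= sqnorm x.
Proof. by apply: sumr_ge0 => i _; rewrite exprn_ge0. Qed.

Lemma sqnorm_eq0 k (x : 'cV[C]_k) : (sqnorm x == 0) = (x == 0).
Proof.
rewrite /sqnorm psumr_eq0; last by move=> i _; rewrite exprn_ge0.
apply/idP/eqP => [/allP x0|->]; last by apply/allP => i _ /=; rewrite mxE normr0 expr0n.
apply/matrixP => i j; rewrite ord1 mxE.
by have /= := x0 i (mem_index_enum _); rewrite sqrf_eq0 normr_eq0 => /eqP.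
Qed.

Lemma adjmx_mul m n p (A : 'M[C]_(m, n)) (B : 'M[C]_(n, p)) :
  adjmx (A *m B) = adjmx B *m adjmx A.
Proof. by rewrite /adjmx map_mxM trmx_mul. Qed.

Lemma adjmxK m n (A : 'M[C]_(m, n)) : adjmx (adjmx A) = A.
Proof. by apply/matrixP => i j; rewrite !mxE conjCK. Qed.

Lemma adjmx_tC m n (A : 'M[C]_(m, n)) : adjmx A = (A ^t*)%sesqui.
Proof. by rewrite /adjmx map_trmx. Qed.

Lemma sqnormE k (x : 'cV[C]_k) : sqnorm x = (adjmx x *m x) 0 0.
Proof. by rewrite !mxE; apply: eq_bigr => i _; rewrite !mxE normCK mulrC. Qed.

Lemma sqnorm_isometry k (F : 'M[C]_k) (x : 'cV[C]_k) :
  adjmx F *m F = 1%:M -> sqnorm (F *m x) = sqnorm x.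
Proof.
by move=> hF; rewrite !sqnormE adjmx_mul -mulmxA (mulmxA (adjmx F)) hF mul1mx.
Qed.

Lemma unitary_inv n (F : 'M[C]_n) : adjmx F *m F = 1%:M ->
  F \in unitmx /\ invmx F = adjmx F.
Proof.
move=> hF; have [_ Fu] := mulmx1_unit hF; split => //.
by rewrite -[LHS]mul1mx -hF mulmxK.
Qed.

Lemma mem_eigvals n (A : 'M[C]_n) z : (z \in eigvals A) = eigenvalue A z.
Proof.
rewrite /eigvals eigenvalue_root_char; case: closed_field_poly_normal => s /= hs.
by rewrite [in RHS]hs (monicP (char_poly_monic A)) scale1r root_prod_XsubC.
Qed.

Lemma opnorm2_ge0 n (A : 'M[C]_n) : 0 <= opnorm2 A.
Proof. by rewrite /opnorm2 sqrtC_ge0 bigmax_ge0. Qed.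

(* [opnorm2 A] is the least [c >= 0] with [|A x| <= c |x|] for all [x]: any such
   [c] bounds it, as one sees by testing on the eigenvectors of [A^* A] ... *)
Lemma opnorm2_le n (A : 'M[C]_n) c : 0 <= c ->
  (forall x, sqnorm (A *m x) <= c ^+ 2 * sqnorm x) -> opnorm2 A <= c.
Proof.
move=> c0 hA; rewrite /opnorm2 -(sqrCK c0) ler_sqrtC ?qualifE /= ?exprn_ge0 //;
  last exact: bigmax_ge0.
rewrite big_seq; apply: bigmax_le; first by rewrite exprn_ge0.
move=> z; rewrite mem_eigvals => /eigenvalueP [v hv vn0].
set x := adjmx v.
have Ax : sqnorm (A *m x) = z * sqnorm x.
  rewrite !sqnormE adjmx_mul /x adjmxK !mulmxA -(mulmxA v) hv.
  by rewrite -scalemxAl mxE.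
have x_gt0 : 0 < sqnorm x.
  rewrite lt_def sqnorm_ge0 sqnorm_eq0 andbT; apply: contra vn0 => /eqP x0.
  by rewrite -(adjmxK v) -/x x0; apply/eqP/matrixP => i j; rewrite !mxE conjC0.
have z0 : 0 <= z by rewrite -(pmulr_lge0 _ x_gt0) -Ax sqnorm_ge0.
by rewrite ger0_norm // -(ler_pM2r x_gt0) -Ax hA.
Qed.

(* ... and [opnorm2 A] is itself such a constant, by the spectral theorem for the
   normal matrix [A^* A]. *)
Lemma sqnorm_mul_le n (A : 'M[C]_n) x :
  sqnorm (A *m x) <= opnorm2 A ^+ 2 * sqnorm x.
Proof.
rewrite /opnorm2 sqrtCK; set H := adjmx A *m A.
have /orthomx_spectralP : H \is normalmx.
  by apply/normalmxP; rewrite -!adjmx_tC /H adjmx_mul adjmxK.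
set P := spectralmx H; set d := spectral_diag H => hE.
have Pu : P \in unitmx by apply: spectral_unit.
have iP : invmx P = adjmx P by rewrite invmx_unitary ?spectral_unitarymx ?adjmx_tC.
have d_le i : `|d 0 i| <= \big[Num.max/0]_(z <- eigvals H) `|z|.
  apply: (le_bigmax_nonneg (F := fun z : C => `|z|)) => //.
  by rewrite mem_eigvals [H in eigenvalue H]hE eigenvalue_diag_conj.
set y := P *m x.
have Ax : sqnorm (A *m x) = \sum_i d 0 i * `|y i 0| ^+ 2.
  rewrite sqnormE adjmx_mul -mulmxA (mulmxA (adjmx A)) -/H hE iP.
  rewrite !mulmxA -adjmx_mul -mulmxA -/y mxE; apply: eq_bigr => i _.
  by rewrite mul_mx_diag !mxE normCK mulrAC mulrC (mulrC (_^*)).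
have -> : sqnorm x = sqnorm y by rewrite sqnorm_isometry // -iP mulVmx.
rewrite -(ger0_norm (sqnorm_ge0 (A *m x))) Ax.
apply: le_trans (ler_norm_sum _ _ _) _; rewrite mulr_sumr; apply: ler_sum => i _.
by rewrite normrM [`|_ ^+ 2|]ger0_norm ?exprn_ge0 // ler_wpM2r ?exprn_ge0 ?d_le.
Qed.

End Norms.

Lemma idx_pairK m n (i : 'I_m) (r : 'I_n) : idx_pair (mxvec_index i r) = (i, r).
Proof. by rewrite /idx_pair /mxvec_index cast_ordK enum_rankK. Qed.

Lemma idx_pairV m n (k : 'I_(m * n)) :
  mxvec_index (idx_pair k).1 (idx_pair k).2 = k.
Proof. by rewrite /idx_pair /mxvec_index -surjective_pairing enum_valK cast_ordKV. Qed.

Section Blocks.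
Variable C : numClosedFieldType.

Lemma sum_blocks m n (f : 'I_(m * n) -> C) :
  \sum_k f k = \sum_i \sum_r f (mxvec_index i r).
Proof.
rewrite pair_big /= (reindex (fun p : 'I_m * 'I_n => mxvec_index p.1 p.2)) //=.
exists (@idx_pair m n) => [p _|k _]; last exact: idx_pairV.
by rewrite idx_pairK -surjective_pairing.
Qed.

Definition blk m n (x : 'cV[C]_(m * n)) (i : 'I_m) : 'cV[C]_n :=
  \col_r x (mxvec_index i r) 0.

Lemma sqnorm_blk m n (x : 'cV[C]_(m * n)) : sqnorm x = \sum_i sqnorm (blk x i).
Proof.
by rewrite /sqnorm sum_blocks; apply: eq_bigr => i _; apply: eq_bigr => r _; rewrite mxE.
Qed.

Lemma blk_inj m n (x y : 'cV[C]_(m * n)) : (forall i, blk x i = blk y i) -> x = y.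
Proof.
move=> h; apply/matrixP => k j; rewrite ord1 -(idx_pairV k).
by have /matrixP /(_ (idx_pair k).2 0) := h (idx_pair k).1; rewrite !mxE.
Qed.

Lemma blk_sum m n I (r : seq I) (f : I -> 'cV[C]_(m * n)) i :
  blk (\sum_(s <- r) f s) i = \sum_(s <- r) blk (f s) i.
Proof.
by apply/matrixP => a b; rewrite !(mxE, summxE); apply: eq_bigr => s _; rewrite mxE.
Qed.

Lemma blkD m n (x y : 'cV[C]_(m * n)) i : blk (x + y) i = blk x i + blk y i.
Proof. by apply/matrixP => a b; rewrite !mxE. Qed.

Lemma blkN m n (x : 'cV[C]_(m * n)) i : blk (- x) i = - blk x i.
Proof. by apply/matrixP => a b; rewrite !mxE. Qed.

Lemma blk0 m n i : blk (0 : 'cV[C]_(m * n)) i = 0.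
Proof. by apply/matrixP => a b; rewrite !mxE. Qed.

Definition blockmx m n (K : 'I_m -> 'I_m -> 'M[C]_n) : 'M[C]_(m * n) :=
  \matrix_(a, b) (let (i, r) := idx_pair a in let (j, s) := idx_pair b in K i j r s).

Lemma blk_blockmx m n (K : 'I_m -> 'I_m -> 'M[C]_n) x i :
  blk (blockmx K *m x) i = \sum_j K i j *m blk x j.
Proof.
apply/matrixP => r c; rewrite ord1 !mxE summxE sum_blocks; apply: eq_bigr => j _.
by rewrite !mxE; apply: eq_bigr => s _; rewrite !mxE !idx_pairK.
Qed.

Lemma blkdiagE m n (B : 'I_m -> 'M[C]_n) :
  blkdiag B = blockmx (fun i j => if i == j then B i else 0).
Proof.
apply/matrixP => a b; rewrite !mxE.
by case: (idx_pair a) => i r; case: (idx_pair b) => j s; case: eqP; rewrite ?mxE.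
Qed.

Lemma blk_blkdiag m n (B : 'I_m -> 'M[C]_n) x i :
  blk (blkdiag B *m x) i = B i *m blk x i.
Proof.
rewrite blkdiagE blk_blockmx (bigD1 i) //= eqxx big1 ?addr0 // => j /negbTE ji.
by rewrite eq_sym ji mul0mx.
Qed.

Lemma blkbidiagE NT d (G : 'M[C]_d) :
  blkbidiag NT G = blockmx (fun i j => if i == j then 1%:M
     else if (i : nat) == (j : nat).+1 then - G else 0).
Proof.
apply/matrixP => a b; rewrite !mxE.
case: (idx_pair a) => i r; case: (idx_pair b) => j s.
by case: eqP => _; rewrite ?mxE //; case: eqP => _; rewrite ?mxE.
Qed.

Lemma blk_blkbidiag0 NT d (G : 'M[C]_d) x :
  blk (blkbidiag NT G *m x) ord0 = blk x ord0.
Proof.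
rewrite blkbidiagE blk_blockmx (bigD1 ord0) //= ?eqxx mul1mx big1 ?addr0 // => j j0.
by rewrite eq_sym (negbTE j0) mul0mx.
Qed.

Lemma blk_blkbidiagS NT d (G : 'M[C]_d) x (t : nat) : (t < NT)%N ->
  blk (blkbidiag NT G *m x) (inord t.+1) = blk x (inord t.+1) - G *m blk x (inord t).
Proof.
move=> tNT; have t_lt : (t < NT.+1)%N by apply: ltnW.
have St_lt : (t.+1 < NT.+1)%N by [].
have tSt : (inord t : 'I_NT.+1) != inord t.+1.
  by apply/eqP => /(congr1 val); rewrite /= !inordK // => /n_Sn.
rewrite blkbidiagE blk_blockmx (bigD1 (inord t.+1)) //= eqxx mul1mx.
rewrite (bigD1 (inord t)) //= eq_sym (negbTE tSt) !inordK // eqxx mulNmx.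
rewrite big1 ?addr0 // => j /andP [jSt jt]; rewrite eq_sym (negbTE jSt).
case: eqP => [/= Sj|_]; last by rewrite mul0mx.
by case/eqP: jt; apply: val_inj; rewrite /= inordK //; case: Sj.
Qed.

End Blocks.

Section SimultaneousDiagonalization.
Variable C : numClosedFieldType.

Lemma mx_ext m n (A B : 'M[C]_(m, n)) : (forall x : 'cV_n, A *m x = B *m x) -> A = B.
Proof.
move=> h; apply/matrixP => i j.
by have /matrixP /(_ i 0) := h (delta_mx j 0); rewrite -!colE !mxE.
Qed.

Lemma eq_blkdiag m n (f g : 'I_m -> 'M[C]_n) : f =1 g -> blkdiag f = blkdiag g.
Proof.
move=> fg; apply/matrixP => a b; rewrite !mxE.
by case: (idx_pair a) => i r; case: (idx_pair b) => j s; rewrite fg.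
Qed.

Lemma blkdiagM m n (f g : 'I_m -> 'M[C]_n) :
  blkdiag f *m blkdiag g = blkdiag (fun i => f i *m g i).
Proof.
apply: mx_ext => x; apply: blk_inj => i.
by rewrite -mulmxA !blk_blkdiag mulmxA.
Qed.

Lemma blkdiagB m n (f g : 'I_m -> 'M[C]_n) :
  blkdiag f - blkdiag g = blkdiag (fun i => f i - g i).
Proof.
apply: mx_ext => x; apply: blk_inj => i.
by rewrite mulmxBl blkD blkN !blk_blkdiag mulmxBl.
Qed.

Lemma blkdiag_scalar m n (a : C) : blkdiag (fun _ : 'I_m => (a%:M : 'M[C]_n)) = a%:M.
Proof.
apply: mx_ext => x; apply: blk_inj => i.
by rewrite blk_blkdiag !mul_scalar_mx; apply/matrixP => r c; rewrite !mxE.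
Qed.

Lemma diag_mxM n (a b : 'I_n -> C) :
  diag_mx (\row_j a j) *m diag_mx (\row_j b j) = diag_mx (\row_j (a j * b j)).
Proof.
apply/matrixP => i j; rewrite mul_diag_mx !mxE.
by case: eqP => [->|_]; rewrite ?mulr1n ?mulr0n ?mulr0.
Qed.

(* Fix a unitary [F] and invertible blocks [U n]: the matrices
   [F diag(U_n diag(g_n) U_n^-1) F^-1] share the eigenbasis given by [F] and the
   [U n], so they form a commutative algebra on which every operation acts on the
   eigenvalues [g n l]. *)
Variables (Nx q : nat) (F : 'M[C]_(Nx * q)) (U : 'I_Nx -> 'M[C]_q).
Hypothesis F_unit : F \in unitmx.
Hypothesis U_unit : forall n, U n \in unitmx.

Definition simblk (g : 'I_Nx -> 'I_q -> C) (n : 'I_Nx) : 'M[C]_q :=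
  U n *m diag_mx (\row_l g n l) *m invmx (U n).

Definition simdiag (g : 'I_Nx -> 'I_q -> C) : 'M[C]_(Nx * q) :=
  F *m blkdiag (simblk g) *m invmx F.

Lemma eq_simdiag g h : (forall n l, g n l = h n l) -> simdiag g = simdiag h.
Proof.
move=> gh; rewrite /simdiag (@eq_blkdiag _ _ (simblk g) (simblk h)) // => n.
by rewrite /simblk; congr (_ *m diag_mx _ *m _); apply/rowP => l; rewrite !mxE gh.
Qed.

Lemma simdiagP (A : 'M[C]_(Nx * q)) B g :
  invmx F *m A *m F = blkdiag B ->
  (forall n, invmx (U n) *m B n *m U n = diag_mx (\row_l g n l)) ->
  A = simdiag g.
Proof.
move=> hA hB; rewrite /simdiag -(@eq_blkdiag _ _ B); last first.
  by move=> n; rewrite /simblk -hB !mulmxA mulmxV // mul1mx mulmxK.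
by rewrite -hA !mulmxA mulmxV // mul1mx mulmxK.
Qed.

Lemma simdiagM g h : simdiag g *m simdiag h = simdiag (fun n l => g n l * h n l).
Proof.
rewrite /simdiag -!mulmxA (mulmxA (invmx F)) mulVmx // mul1mx.
rewrite !mulmxA -(mulmxA F) blkdiagM; congr (_ *m _ *m _); apply: eq_blkdiag => n.
by rewrite /simblk !mulmxA mulmxKV // -(mulmxA (U n)) diag_mxM.
Qed.

Lemma simdiagB g h : simdiag g - simdiag h = simdiag (fun n l => g n l - h n l).
Proof.
rewrite /simdiag -mulmxBl -mulmxBr blkdiagB; congr (_ *m _ *m _).
apply: eq_blkdiag => n; rewrite /simblk -mulmxBl -mulmxBr; congr (_ *m _ *m _).
by apply/matrixP => i j; rewrite !mxE mulrnBl.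
Qed.

Lemma simdiag_cst a : simdiag (fun _ _ => a) = a%:M.
Proof.
rewrite /simdiag (@eq_blkdiag _ _ _ (fun _ => a%:M)) ?blkdiag_scalar.
  by rewrite mul_mx_scalar -scalemxAl mulmxV // scalemx1.
move=> n; rewrite /simblk; have -> : diag_mx (\row_(l < q) a) = a%:M.
  by apply/matrixP => i j; rewrite !mxE.
by rewrite mul_mx_scalar -scalemxAl mulmxV // scalemx1.
Qed.

Lemma simdiagX g k : simdiag g ^+ k = simdiag (fun n l => g n l ^+ k).
Proof.
elim: k => [|k IH]; first by rewrite expr0 (@eq_simdiag _ (fun _ _ => 1)) ?simdiag_cst.
by rewrite exprS -mulmxE IH simdiagM; apply: eq_simdiag => n l; rewrite exprS.
Qed.

End SimultaneousDiagonalization.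

Section CoarseGridCorrection.
Variable C : numClosedFieldType.
Variables (NT d : nat) (P Pc : 'M[C]_d).

Local Notation AS := (blkbidiag NT P).
Local Notation Ac := (blkbidiag NT Pc).

Lemma inord0 : (inord 0 : 'I_NT.+1) = ord0.
Proof. by apply: val_inj; rewrite /= inordK. Qed.

(* Block forward substitution: [B_NT(G)] is invertible whatever [G] is. *)
Lemma blkbidiag_unit (G : 'M[C]_d) : blkbidiag NT G \in unitmx.
Proof.
rewrite unitmxE unitfE -det_tr; apply/negP => /det0P [v vn0 hv].
pose w := v^T.
have Gw : blkbidiag NT G *m w = 0.
  by have := congr1 trmx hv; rewrite trmx_mul trmxK trmx0.
have w_blk0 t : (t <= NT)%N -> blk w (inord t) = 0.
  elim: t => [_|t IH tNT].
    by rewrite inord0 -(blk_blkbidiag0 G) Gw blk0.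
  by have := blk_blkbidiagS G w tNT; rewrite Gw blk0 IH ?(ltnW tNT) // mulmx0 subr0.
have w0 : w = 0.
  by apply: blk_inj => i; rewrite blk0 -(inord_val i) w_blk0 // -ltnS.
by move: vn0; rewrite -(trmxK v) -/w w0 trmx0 eqxx.
Qed.

Lemma blk_EF (x : 'cV_(NT.+1 * d)) (i : 'I_NT.+1) :
  blk ((1%:M - invmx Ac *m AS) *m x) i =
  \sum_(s < i) Pc ^+ (i - s.+1) *m (P - Pc) *m blk x (inord s).
Proof.
set v := invmx Ac *m (AS *m x).
have Acv : Ac *m v = AS *m x by rewrite /v mulKVmx ?blkbidiag_unit.
rewrite mulmxBl mul1mx -mulmxA -/v.
suff blk_t t : (t <= NT)%N -> blk (x - v) (inord t) =
    \sum_(s < t) Pc ^+ (t - s.+1) *m (P - Pc) *m blk x (inord s).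
  by rewrite -{1}(inord_val i) blk_t // -ltnS.
elim: t => [_|t IH tNT].
  rewrite big_ord0 inord0 blkD blkN.
  by rewrite -(blk_blkbidiag0 Pc v) Acv blk_blkbidiag0 subrr.
have := blk_blkbidiagS Pc v tNT; rewrite Acv blk_blkbidiagS // => /esym/eqP.
rewrite subr_eq => /eqP vS.
have shift : \sum_(s < t) Pc ^+ (t.+1 - s.+1) *m (P - Pc) *m blk x (inord s) =
   Pc *m \sum_(s < t) Pc ^+ (t - s.+1) *m (P - Pc) *m blk x (inord s).
  rewrite mulmx_sumr; apply: eq_bigr => s _.
  by rewrite subSS -(subnSK (ltn_ord s)) exprS -mulmxE !mulmxA.
rewrite big_ord_recr /= subnn expr0 mul1mx shift -(IH (ltnW tNT)) !(blkD, blkN) vS.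
rewrite mulmxBr mulmxBl [RHS]addrC [RHS]addrA subrK.
by rewrite opprD opprB addrA (addrC (blk x _)) subrK.
Qed.

Lemma blk_EFCF (x : 'cV_(NT.+1 * d)) (i : 'I_NT.+1) :
  blk ((1%:M - invmx Ac *m AS) *m (1%:M - AS) *m x) i =
  \sum_(s < i) (if (i - s.+1)%N is k.+1 then Pc ^+ k *m (P - Pc) *m P else 0)
      *m blk x (inord s).
Proof.
rewrite -mulmxA blk_EF; set y := (1%:M - AS) *m x.
have y0 : blk y (inord 0) = 0.
  by rewrite inord0 /y mulmxBl mul1mx blkD blkN blk_blkbidiag0 subrr.
have yS s : (s < NT)%N -> blk y (inord s.+1) = P *m blk x (inord s).
  by move=> sNT; rewrite /y mulmxBl mul1mx blkD blkN blk_blkbidiagS // opprB addrC subrK.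
case: i => [[|t] /= tNT]; first by rewrite !big_ord0.
rewrite big_ord_recl big_ord_recr /= y0 mulmx0 add0r subnn mul0mx addr0.
apply: eq_bigr => s _; rewrite /bump /= add1n yS ?(ltn_trans (ltn_ord s)) //.
by rewrite !subSS -(subnSK (ltn_ord s)) !mulmxA.
Qed.

End CoarseGridCorrection.

Section Convolution.
Variable C : numClosedFieldType.

(* Weighted Cauchy-Schwarz: [(sum h u)^2 <= (sum h) (sum h u^2)] for [h, u >= 0];
   it follows from [sum_(i,j) h_i h_j (u_i - u_j)^2 >= 0]. *)
Lemma weighted_cauchy_schwarz n (h u : 'I_n -> C) :
  (forall i, 0 <= h i) -> (forall i, 0 <= u i) ->
  (\sum_i h i * u i) ^+ 2 <= (\sum_i h i) * (\sum_i h i * u i ^+ 2).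
Proof.
move=> h0 u0.
have expand : \sum_i \sum_j h i * h j * (u i - u j) ^+ 2 =
   2 * ((\sum_i h i) * (\sum_i h i * u i ^+ 2) - (\sum_i h i * u i) ^+ 2).
  have E : \sum_i \sum_j h i * h j * (u i - u j) ^+ 2 =
     (\sum_i h i * u i ^+ 2) * (\sum_j h j) + (\sum_i h i) * (\sum_j h j * u j ^+ 2)
     - 2 * ((\sum_i h i * u i) * (\sum_j h j * u j)).
    rewrite !big_distrlr /= mulr_sumr -big_split -sumrB /=; apply: eq_bigr => i _.
    by rewrite mulr_sumr -big_split -sumrB /=; apply: eq_bigr => j _; ring.
  by rewrite E; ring.
have : 0 <= \sum_i \sum_j h i * h j * (u i - u j) ^+ 2.
  apply: sumr_ge0 => i _; apply: sumr_ge0 => j _.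
  apply: mulr_ge0; first exact: mulr_ge0.
  by rewrite -realEsqr rpredB // ger0_real.
by rewrite expand pmulr_rge0 // subr_ge0.
Qed.

Lemma schur_test n (h : 'I_n -> 'I_n -> C) (w : 'I_n -> C) (S : C) :
  0 <= S -> (forall t s, 0 <= h t s) -> (forall s, 0 <= w s) ->
  (forall t, \sum_s h t s <= S) -> (forall s, \sum_t h t s <= S) ->
  \sum_t (\sum_s h t s * w s) ^+ 2 <= S ^+ 2 * \sum_s w s ^+ 2.
Proof.
move=> S0 h0 w0 row col.
have hw2_ge0 t : 0 <= \sum_s h t s * w s ^+ 2.
  by apply: sumr_ge0 => s _; rewrite mulr_ge0 ?exprn_ge0.
apply: (@le_trans _ _ (\sum_t S * \sum_s h t s * w s ^+ 2)).
  apply: ler_sum => t _; apply: le_trans (weighted_cauchy_schwarz _ _) _ => //=.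
  by rewrite ler_wpM2r ?hw2_ge0 ?row.
rewrite -mulr_sumr exchange_big /= expr2 -mulrA ler_wpM2l // mulr_sumr.
by apply: ler_sum => s _; rewrite -mulr_suml ler_wpM2r ?exprn_ge0 ?col.
Qed.

Definition causal_kernel K (g : nat -> C) (t s : 'I_K.+1) : C :=
  if (s < t)%N then `|g (t - s.+1)%N| else 0.

Lemma causal_kernel_ge0 K g (t s : 'I_K.+1) : 0 <= causal_kernel g t s.
Proof. by rewrite /causal_kernel; case: ifP. Qed.

Lemma sum_norm_prefix K (g : nat -> C) n : (n <= K)%N ->
  \sum_(0 <= k < n) `|g k| <= \sum_(k < K) `|g k|.
Proof.
move=> nK; rewrite -(big_mkord xpredT (fun k => `|g k|)) (@big_cat_nat _ _ _ n 0 K) //=.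
by rewrite lerDl sumr_ge0.
Qed.

Lemma causal_kernel_row K g (t : 'I_K.+1) :
  \sum_s causal_kernel g t s <= \sum_(k < K) `|g k|.
Proof.
rewrite /causal_kernel -big_mkcond /=.
rewrite -(big_ord_widen K.+1 (fun s => `|g (t - s.+1)%N|) (ltnW (ltn_ord t))).
rewrite -(big_mkord xpredT (fun s => `|g (t - s.+1)%N|)) big_nat_rev /= add0n.
rewrite (@eq_big_nat _ _ _ 0 t _ (fun k => `|g k|)).
  by rewrite sum_norm_prefix // -ltnS.
by move=> k /andP [_ kt]; congr `|g _|; move: kt; move: (nat_of_ord t) => T; lia.
Qed.

Lemma causal_kernel_col K g (s : 'I_K.+1) :
  \sum_t causal_kernel g t s <= \sum_(k < K) `|g k|.
Proof.
rewrite /causal_kernel.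
rewrite -(big_mkord xpredT (fun t => if (s < t)%N then `|g (t - s.+1)%N| else 0)).
rewrite (@big_cat_nat _ _ _ s.+1 0 K.+1) //= big1_seq ?add0r; last first.
  by move=> t /andP [_]; rewrite mem_index_iota => /andP [_ ts]; rewrite ltnNge -ltnS ts.
rewrite (@eq_big_nat _ _ _ s.+1 K.+1 _ (fun t => `|g (t - s.+1)%N|)); last first.
  by move=> t /andP [st _]; rewrite st.
rewrite -{1}(add0n s.+1) big_addn subSS.
rewrite (@eq_big_nat _ _ _ 0 (K - s) _ (fun k => `|g k|)).
  by rewrite sum_norm_prefix // leq_subr.
by move=> k _; rewrite addnK.
Qed.

(* Young's inequality for the causal convolution [(g * w)_t = sum_(s<t) g_(t-s-1) w_s]:
   its [l^2] norm is at most [|g|_1 |w|_2], by the Schur test for its kernel. *)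
Lemma young_convolution (K : nat) (g w : nat -> C) :
  \sum_(t < K.+1) `|\sum_(s < t) g (t - s.+1)%N * w s| ^+ 2 <=
  (\sum_(k < K) `|g k|) ^+ 2 * \sum_(s < K.+1) `|w s| ^+ 2.
Proof.
have conv_le (t : 'I_K.+1) :
    `|\sum_(s < t) g (t - s.+1)%N * w s| <= \sum_s causal_kernel g t s * `|w s|.
  rewrite (big_ord_widen K.+1 (fun s => g (t - s.+1)%N * w s) (ltnW (ltn_ord t))).
  rewrite big_mkcond /=; apply: le_trans (ler_norm_sum _ _ _) _.
  apply: ler_sum => s _; rewrite /causal_kernel.
  by case: ifP => _; rewrite ?normrM // normr0 mul0r.
apply: le_trans (schur_test _ (@causal_kernel_ge0 K g) _
                   (causal_kernel_row g) (causal_kernel_col g)) => //.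
  apply: ler_sum => t _; apply: lerXn2r; rewrite ?qualifE /= ?conv_le //.
  by apply: sumr_ge0 => s _; rewrite mulr_ge0 ?causal_kernel_ge0.
exact: sumr_ge0.
Qed.

End Convolution.

Section ToeplitzBounds.
Variable C : numClosedFieldType.

Definition block_bound q K (V : 'M[C]_q) (g : 'I_q -> nat -> C) : C :=
  cond2 V * \big[Num.max/0]_(l < q) \sum_(k < K) `|g l k|.

Lemma block_bound_ge0 q K (V : 'M[C]_q) g : 0 <= block_bound K V g.
Proof.
rewrite mulr_ge0 ?mulr_ge0 ?opnorm2_ge0 ?bigmax_ge0 // => l.
exact: sumr_ge0.
Qed.

(* A causal Toeplitz operator whose [q x q] blocks are diagonalized by a common
   [U], with eigenvalues [g l k], has norm at most
   [kappa(U) max_l sum_k |g l k|]: conjugating by [U] leaves [q] scalar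
   convolutions, each bounded by Young's inequality. *)
Lemma toeplitz_one_block q K (U : 'M[C]_q) (g : 'I_q -> nat -> C)
    (x : nat -> 'cV[C]_q) : U \in unitmx ->
  \sum_(t < K.+1)
     sqnorm (\sum_(s < t) (U *m diag_mx (\row_l g l (t - s.+1)%N) *m invmx U) *m x s)
  <= block_bound K U g ^+ 2 * \sum_(t < K.+1) sqnorm (x t).
Proof.
move=> Uu; rewrite /block_bound; set beta := \big[Num.max/0]_(l < q) _.
pose y s := invmx U *m x s.
have sum_ge0 l : 0 <= \sum_(k < K) `|g l k| by apply: sumr_ge0.
have beta_ge l : (\sum_(k < K) `|g l k|) ^+ 2 <= beta ^+ 2.
  apply: lerXn2r; rewrite ?qualifE /= ?sum_ge0 ?bigmax_ge0 //.
  apply: (le_bigmax_nonneg (F := fun l => \sum_(k < K) `|g l k|)) => //.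
  by rewrite mem_index_enum.
have factor t : \sum_(s < t) (U *m diag_mx (\row_l g l (t - s.+1)%N) *m invmx U) *m x s
    = U *m \sum_(s < t) diag_mx (\row_l g l (t - s.+1)%N) *m y s.
  by rewrite mulmx_sumr; apply: eq_bigr => s _; rewrite !mulmxA.
have coords t : sqnorm (\sum_(s < t) diag_mx (\row_l g l (t - s.+1)%N) *m y s)
    = \sum_l `|\sum_(s < t) g l (t - s.+1)%N * y s l 0| ^+ 2.
  apply: eq_bigr => l _; rewrite summxE; congr (`|_| ^+ 2).
  by apply: eq_bigr => s _; rewrite mul_diag_mx !mxE.
have young_l l : \sum_(t < K.+1) `|\sum_(s < t) g l (t - s.+1)%N * y s l 0| ^+ 2
    <= beta ^+ 2 * \sum_(s < K.+1) `|y s l 0| ^+ 2.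
  apply: le_trans (young_convolution K (g l) (fun s => y s l 0)) _.
  by apply: ler_wpM2r (beta_ge l); apply: sumr_ge0 => s _; rewrite exprn_ge0.
have y_le s : sqnorm (y s) <= opnorm2 (invmx U) ^+ 2 * sqnorm (x s).
  exact: sqnorm_mul_le.
apply: (@le_trans _ _ (opnorm2 U ^+ 2 *
    \sum_(t < K.+1) sqnorm (\sum_(s < t) diag_mx (\row_l g l (t - s.+1)%N) *m y s))).
  by rewrite mulr_sumr; apply: ler_sum => t _; rewrite factor sqnorm_mul_le.
apply: (@le_trans _ _ (opnorm2 U ^+ 2 * (beta ^+ 2 * \sum_(s < K.+1) sqnorm (y s)))).
  rewrite ler_wpM2l ?exprn_ge0 ?opnorm2_ge0 //.
  under eq_bigr do rewrite coords.
  rewrite exchange_big /= /sqnorm [X in _ <= _ * X]exchange_big /= mulr_sumr.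
  by apply: ler_sum => l _; apply: young_l.
rewrite (_ : (cond2 U * beta) ^+ 2 * _ = opnorm2 U ^+ 2 * (beta ^+ 2 *
    \sum_(t < K.+1) opnorm2 (invmx U) ^+ 2 * sqnorm (x t))); last first.
  by rewrite -mulr_sumr /cond2; ring.
apply: ler_wpM2l; first by rewrite exprn_ge0 ?opnorm2_ge0.
apply: ler_wpM2l; first by rewrite exprn_ge0 ?bigmax_ge0.
by apply: ler_sum => s _; apply: y_le.
Qed.

Definition toeplitz_bound Nx q K (U : 'I_Nx -> 'M[C]_q)
    (gam : 'I_Nx -> 'I_q -> nat -> C) : C :=
  \big[Num.max/0]_(n < Nx) block_bound K (U n) (gam n).

Lemma toeplitz_bound_ge0 Nx q K U gam : 0 <= @toeplitz_bound Nx q K U gam.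
Proof. by apply: bigmax_ge0 => n; apply: block_bound_ge0. Qed.

(* The same for a causal Toeplitz operator on [Nx * q] blocks whose blocks are
   simultaneously diagonalized by a unitary [F] and invertible [U n]: after the
   isometry [F^-1] it splits into [Nx] independent one-block operators. *)
Lemma toeplitz_simdiag Nx q K (F : 'M[C]_(Nx * q)) (U : 'I_Nx -> 'M[C]_q)
    (gam : 'I_Nx -> 'I_q -> nat -> C) (c : nat -> 'M[C]_(Nx * q))
    (X : nat -> 'cV[C]_(Nx * q)) :
  adjmx F *m F = 1%:M -> (forall n, U n \in unitmx) ->
  (forall k, c k = simdiag F U (fun n l => gam n l k)) ->
  \sum_(t < K.+1) sqnorm (\sum_(s < t) c (t - s.+1)%N *m X s) <=
  toeplitz_bound K U gam ^+ 2 * \sum_(t < K.+1) sqnorm (X t).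
Proof.
move=> hF U_unit hc; have [F_unit iF] := unitary_inv hF.
set B := toeplitz_bound K U gam.
pose Y s := invmx F *m X s.
have split_blocks t : sqnorm (\sum_(s < t) c (t - s.+1)%N *m X s) =
    \sum_n sqnorm (\sum_(s < t) simblk U (fun n l => gam n l (t - s.+1)%N) n
                      *m blk (Y s) n).
  rewrite (_ : \sum_(s < t) _ = F *m \sum_(s < t)
      blkdiag (simblk U (fun n l => gam n l (t - s.+1)%N)) *m Y s); last first.
    by rewrite mulmx_sumr; apply: eq_bigr => s _; rewrite hc /simdiag !mulmxA.
  rewrite sqnorm_isometry // sqnorm_blk; apply: eq_bigr => n _.
  by rewrite blk_sum; congr sqnorm; apply: eq_bigr => s _; rewrite blk_blkdiag.
have block_le n : block_bound K (U n) (gam n) ^+ 2 <= B ^+ 2.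
  apply: lerXn2r; rewrite ?qualifE /= ?toeplitz_bound_ge0 ?block_bound_ge0 //.
  apply: (le_bigmax_nonneg (F := fun n => block_bound K (U n) (gam n))).
    by move=> i; apply: block_bound_ge0.
  by rewrite mem_index_enum.
have Y_norm t : sqnorm (Y t) = sqnorm (X t).
  by rewrite /Y iF sqnorm_isometry // adjmxK -iF mulmxV.
under eq_bigr do rewrite split_blocks.
under [X in _ <= _ * X]eq_bigr do rewrite -Y_norm sqnorm_blk.
rewrite exchange_big [X in _ <= _ * X]exchange_big mulr_sumr /=; apply: ler_sum => n _.
apply: le_trans (toeplitz_one_block K (gam n) (fun s => blk (Y s) n) (U_unit n)) _.
by apply: ler_wpM2r (block_le n); apply: sumr_ge0 => t _; apply: sqnorm_ge0.
Qed.

Lemma opnorm2_toeplitz Nx q K (F : 'M[C]_(Nx * q)) (U : 'I_Nx -> 'M[C]_q)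
    (gam : 'I_Nx -> 'I_q -> nat -> C) (c : nat -> 'M[C]_(Nx * q))
    (E : 'M[C]_(K.+1 * (Nx * q))) :
  adjmx F *m F = 1%:M -> (forall n, U n \in unitmx) ->
  (forall k, c k = simdiag F U (fun n l => gam n l k)) ->
  (forall x (i : 'I_K.+1),
     blk (E *m x) i = \sum_(s < i) c (i - s.+1)%N *m blk x (inord s)) ->
  opnorm2 E <= toeplitz_bound K U gam.
Proof.
move=> hF U_unit hc hE; apply: opnorm2_le (toeplitz_bound_ge0 _ _ _) _ => x.
rewrite !sqnorm_blk; under eq_bigr do rewrite hE.
under [X in _ <= _ * X]eq_bigr => i _ do rewrite -[i in blk x i]inord_val.
exact: (toeplitz_simdiag K (fun s => blk x (inord s)) hF U_unit hc).
Qed.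

End ToeplitzBounds.

Section CoarseGridBounds.
Variable C : numClosedFieldType.

Lemma geometric_sum (a : C) n :
  a != 1 -> \sum_(k < n) a ^+ k = (1 - a ^+ n) / (1 - a).
Proof.
move=> a1; have -> : 1 - a ^+ n = (1 - a) * \sum_(k < n) a ^+ k.
  by rewrite -opprB subrX1 -mulNr opprB.
by rewrite mulrC mulKf // subr_eq0 eq_sym.
Qed.

Lemma sum_norm_symbolF (a b : C) N : `|a| != 1 ->
  \sum_(k < N) `|a ^+ k * b| = `|b| * ((1 - `|a| ^+ N) / (1 - `|a|)).
Proof.
move=> a1; rewrite -geometric_sum // mulr_sumr.
by apply: eq_bigr => k _; rewrite normrM normrX mulrC.
Qed.

Lemma sum_norm_symbolFCF (a b c : C) N : `|a| != 1 ->
  \sum_(k < N) `|if (k : nat) is k'.+1 then a ^+ k' * b * c else 0|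
  = `|b| * `|c| * ((1 - `|a| ^+ N.-1) / (1 - `|a|)).
Proof.
move=> a1; case: N => [|N]; first by rewrite big_ord0 expr0 subrr mul0r mulr0.
rewrite big_ord_recl /= normr0 add0r -geometric_sum // mulr_sumr.
by apply: eq_bigr => k _; rewrite add0n !normrM normrX -mulrA mulrC.
Qed.

Variables (Nx q NT m : nat) (F : 'M[C]_(Nx * q)) (U : 'I_Nx -> 'M[C]_q).
Variables (lam mu : 'I_Nx -> 'I_q -> C).
Hypothesis F_unitary : adjmx F *m F = 1%:M.
Hypothesis U_unit : forall n, U n \in unitmx.
Hypothesis mu_norm1 : forall n l, `|mu n l| != 1.

Local Notation Phi := (simdiag F U lam).
Local Notation Phic := (simdiag F U mu).
Local Notation Ac := (blkbidiag NT Phic).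
Local Notation AS := (blkbidiag NT (Phi ^+ m)).

Let F_unit : F \in unitmx. Proof. by have [] := unitary_inv F_unitary. Qed.

(* F-relaxation: the symbol of [E^F] is [mu^k (lam^m - mu)], whose [l^1] norm over
   [k < NT] is [|lam^m - mu| (1 - |mu|^NT) / (1 - |mu|)]. *)
Lemma EF_bound :
  opnorm2 (1%:M - invmx Ac *m AS) <=
    \big[Num.max/0]_(n < Nx)
      (cond2 (U n) *
       \big[Num.max/0]_(l < q)
         (`|lam n l ^+ m - mu n l| * ((1 - `|mu n l| ^+ NT) / (1 - `|mu n l|)))).
Proof.
pose gam n l k := mu n l ^+ k * (lam n l ^+ m - mu n l).
rewrite [X in _ <= X](_ : _ = toeplitz_bound NT U gam); last first.
  apply: eq_bigr => n _; congr (_ * _); apply: eq_bigr => l _.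
  by rewrite sum_norm_symbolF ?mu_norm1.
apply: (opnorm2_toeplitz (c := fun k => Phic ^+ k *m (Phi ^+ m - Phic))
          F_unitary U_unit) => [k|x i]; last exact: blk_EF.
by rewrite !simdiagX // simdiagB simdiagM.
Qed.

(* FCF-relaxation: the symbol of [E^FCF] is [0, mu^k (lam^m - mu) lam^m], whose
   [l^1] norm over [k < NT] is [|lam^m - mu| |lam|^m (1 - |mu|^(NT-1)) / (1 - |mu|)]. *)
Lemma EFCF_bound :
  opnorm2 ((1%:M - invmx Ac *m AS) *m (1%:M - AS)) <=
    \big[Num.max/0]_(n < Nx)
      (cond2 (U n) *
       \big[Num.max/0]_(l < q)
         (`|lam n l ^+ m - mu n l| * `|lam n l| ^+ m
            * ((1 - `|mu n l| ^+ NT.-1) / (1 - `|mu n l|)))).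
Proof.
pose gam n l k :=
  if k is k'.+1 then mu n l ^+ k' * (lam n l ^+ m - mu n l) * lam n l ^+ m else 0.
rewrite [X in _ <= X](_ : _ = toeplitz_bound NT U gam); last first.
  apply: eq_bigr => n _; congr (_ * _); apply: eq_bigr => l _.
  by rewrite sum_norm_symbolFCF ?mu_norm1 // normrX.
apply: (opnorm2_toeplitz
  (c := fun k => if k is k'.+1 then Phic ^+ k' *m (Phi ^+ m - Phic) *m Phi ^+ m else 0)
  F_unitary U_unit) => [[|k]|x i]; last exact: blk_EFCF.
  by rewrite (@eq_simdiag _ _ _ _ _ _ (fun _ _ => 0)) // simdiag_cst // raddf0.
by rewrite !simdiagX // simdiagB !simdiagM.
Qed.

End CoarseGridBounds.

Unset Implicit Arguments.

Theorem mainTheorem1 (C : numClosedFieldType) (q Nx NT m : nat)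
  (hq : (1 <= q)%N) (hNx : (1 <= Nx)%N) (hNT : (1 <= NT)%N) (hm : (1 <= m)%N)
  (Phi Phic F : 'M[C]_(Nx * q))
  (Phit Phict : 'I_Nx -> 'M[C]_q)
  (U : 'I_Nx -> 'M[C]_q)
  (lam mu : 'I_Nx -> 'I_q -> C)
  (hFunit : adjmx F *m F = 1%:M)
  (hPhi : invmx F *m Phi *m F = blkdiag Phit)
  (hPhic : invmx F *m Phic *m F = blkdiag Phict)
  (hU : forall n, U n \in unitmx)
  (hlam : forall n, invmx (U n) *m Phit n *m U n = diag_mx (\row_l lam n l))
  (hmu : forall n, invmx (U n) *m Phict n *m U n = diag_mx (\row_l mu n l))
  (hmu1 : forall n l, `|mu n l| != 1) :
  let Ac := blkbidiag NT Phic in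
  let AS := blkbidiag NT (Phi ^+ m) in
  let EF := 1%:M - invmx Ac *m AS in
  let EFCF := (1%:M - invmx Ac *m AS) *m (1%:M - AS) in
  opnorm2 EF <=
    \big[Num.max/0]_(n < Nx)
      (cond2 (U n) *
       \big[Num.max/0]_(l < q)
         (`|lam n l ^+ m - mu n l| * ((1 - `|mu n l| ^+ NT) / (1 - `|mu n l|))))
  /\
  opnorm2 EFCF <=
    \big[Num.max/0]_(n < Nx)
      (cond2 (U n) *
       \big[Num.max/0]_(l < q)
         (`|lam n l ^+ m - mu n l| * `|lam n l| ^+ m
            * ((1 - `|mu n l| ^+ NT.-1) / (1 - `|mu n l|)))).
Proof.
have [F_unit _] := unitary_inv hFunit.
rewrite (simdiagP F_unit hU hPhi hlam) (simdiagP F_unit hU hPhic hmu) /=.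
split; [exact: EF_bound | exact: EFCF_bound].
Qed.
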